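(* Let $p+q=4k+1$ with $k\ge1$. If $p-4\ge1$ and $q\ge1$, then $\mathbb{O}_{p,q}\simeq\mathbb{O}_{p-4,q+4}$. If $p\ge1$, $q-1\ge1$ and $p$ is even, then $\mathbb{O}_{p,q}\simeq\mathbb{O}_{p+1,q-1}$. (The isomorphisms preserve the $\mathbb{Z}_2^n$-graded structure.)
   Context: $\mathbb{Z}_2=\{0,1\}$. For $p+q=n\ge3$, $\mathbb{O}_{p,q}$ is the real algebra with basis $\{u_x: x\in\mathbb{Z}_2^n\}$ and product $u_x\cdot u_y=(-1)^{f(x,y)}u_{x+y}$, where $f(x,y)=\sum_{1\le i<j<k\le n}(x_ix_jy_k+x_iy_jx_k+y_ix_jx_k)+\sum_{1\le i\le j\le n}x_iy_j+\sum_{1\le i\le p}x_iy_i$. Homogeneous elements are scalar multiples of some $u_x$. *)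

From HB Require Import structures.
From mathcomp Require Import all_boot all_order all_algebra.
From mathcomp Require Import reals.
Set Implicit Arguments. Unset Strict Implicit. Unset Printing Implicit Defensive.
Import Order.TTheory GRing.Theory Num.Theory.
Local Open Scope ring_scope.

(* Z_2^n, with coordinates indexed 0..n-1 (coordinate i+1 of the paper). *)
Notation Z2n n := {ffun 'I_n -> bool}.

Definition z2add n (x y : Z2n n) : Z2n n := [ffun i => x i (+) y i].

(* the twisting function f of the paper for O_{p,q}, n = p + q (as a natural
   number; only its parity matters).  Paper indices 1..n become 0..n-1, so
   "i <= p" becomes "i < p". *)
Definition ftw (n p : nat) (x y : Z2n n) : nat := (
  (\sum_(i < n) \sum_(j < n) \sum_(k < n)
      ((i < j) && (j < k))%N *
      (x i * x j * y k + x i * y j * x k + y i * x j * x k))%N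
  + (\sum_(i < n) \sum_(j < n) (i <= j)%N * (x i * y j))%N
  + (\sum_(i < n) (i < p) * (x i * y i)))%N.

Notation Oalg R n := {ffun Z2n n -> R^o}.

Section Alg.
Variable R : realType.

Definition ub n (x : Z2n n) : Oalg R n := [ffun z => (z == x)%:R].

Definition omul (n p : nat) (a b : Oalg R n) : Oalg R n :=
  \sum_(x : Z2n n) \sum_(y : Z2n n)
     (a x * b y * (-1) ^+ @ftw n p x y) *: ub (z2add x y).

(* graded isomorphism O_{p,q} ~ O_{p',q'} with p+q = p'+q' = n: a bijective
   R-linear multiplicative map sending homogeneous elements (multiples of
   basis elements) to homogeneous elements. *)
Definition graded_iso (n p p' : nat) : Prop :=
  exists phi : Oalg R n -> Oalg R n,
    [/\ forall a b, phi (a + b) = phi a + phi b,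
        forall (c : R) a, phi (c *: a) = c *: phi a,
        bijective phi,
        forall a b, phi (@omul n p a b) = @omul n p' (phi a) (phi b)
      & forall x : Z2n n, exists (y : Z2n n) (c : R),
          c != 0 /\ phi (ub x) = c *: ub y].
End Alg.

From HB Require Import structures.
From mathcomp Require Import all_boot all_order all_algebra.
From mathcomp Require Import reals.
From mathcomp Require Import zify ring.
Set Implicit Arguments. Unset Strict Implicit. Unset Printing Implicit Defensive.

(* A map u_x |-> (-1)^sig(x) u_(T x), with T a linear automorphism of Z_2^n, is a
   graded isomorphism O_(p,q) -> O_(p',q') when f_p(x,y) + f_p'(Tx,Ty) is the
   coboundary sig(x) + sig(y) + sig(x+y).  The coboundary of the twisting function
   f_p is determined by its diagonal alpha_p(x) = f_p(x,x), so when
   alpha_p' o T = alpha_p that sum is a 2-cocycle of Z_2^n vanishing on the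
   diagonal, and such cocycles are coboundaries (extend sig one coordinate at a
   time).  Finally alpha_p(x) = [|x| <> 0 mod 4] + |x /\ {1..p}| mod 2, and T is a
   product of two transvections x |-> x + <x,u> v with |v| = 2 mod 4: these keep
   whether |x| = 0 mod 4 and trade the mask {1..p} for {1..p-4}, resp. {1..p+1}. *)

Local Notation "x +' y" := (z2add x y) (at level 50, left associativity).

Lemma odd_sum (I : Type) (r : seq I) (P : pred I) (F : I -> nat) :
  odd (\sum_(i <- r | P i) F i) = \big[addb/false]_(i <- r | P i) odd (F i).
Proof. exact: (big_morph odd oddD). Qed.

Lemma big_addb_andl (I : Type) (r : seq I) (P : pred I) b (F : I -> bool) :
  \big[addb/false]_(i <- r | P i) (b && F i) = b && \big[addb/false]_(i <- r | P i) F i.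
Proof. by case: b => //=; rewrite big1. Qed.

Lemma odd_mod4 c : odd (c %% 4) = odd c.
Proof. by rewrite {2}(divn_eq c 4) oddD oddM andbF. Qed.

Lemma mod4_even w : w %% 4 = 2 -> ~~ odd w.
Proof. by move=> w4; rewrite -odd_mod4 w4. Qed.

Lemma big_addb_ord_prefix (n j : nat) (F : nat -> bool) : j <= n ->
  \big[addb/false]_(i < n) ((i < j) && F i) = \big[addb/false]_(0 <= i < j) F i.
Proof.
move=> jn; rewrite -(big_mkord xpredT (fun i => (i < j) && F i)).
rewrite (@big_cat_nat _ _ _ j 0 n _ _ (leq0n j) jn) /=.
rewrite [X in _ (+) X]big_nat_cond [X in _ (+) X]big1 ?addbF.
  by apply: eq_big_nat => i /andP[_ ->].
by move=> i /andP[/andP[ji _] _]; rewrite ltnNge ji.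
Qed.

Section Z2n.
Variable n : nat.
Implicit Types x y z : Z2n n.

Definition z2zero : Z2n n := [ffun=> false].
Definition z2ones : Z2n n := [ffun=> true].
Definition z2unit (a : 'I_n) : Z2n n := [ffun i => i == a].

Lemma z2addC x y : x +' y = y +' x.
Proof. by apply/ffunP=> i; rewrite !ffunE addbC. Qed.

Lemma z2addA x y z : x +' (y +' z) = x +' y +' z.
Proof. by apply/ffunP=> i; rewrite !ffunE addbA. Qed.

Lemma z2addxx x : x +' x = z2zero.
Proof. by apply/ffunP=> i; rewrite !ffunE addbb. Qed.

Lemma z2addx0 x : x +' z2zero = x.
Proof. by apply/ffunP=> i; rewrite !ffunE addbF. Qed.

Lemma z2add0x x : z2zero +' x = x.
Proof. by rewrite z2addC z2addx0. Qed.

Lemma z2addK x y : x +' y +' y = x.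
Proof. by rewrite -z2addA z2addxx z2addx0. Qed.

Lemma z2addKl x y : x +' (x +' y) = y.
Proof. by rewrite z2addA z2addxx z2add0x. Qed.

End Z2n.

Section Twist.
Variable n : nat.
Implicit Types x y z : Z2n n.

Definition cubic_term x y (i j k : 'I_n) : bool :=
  (x i && x j && y k) (+) (x i && y j && x k) (+) (y i && x j && x k).

Definition twist (p : nat) x y : bool :=
  (\big[addb/false]_(i < n) \big[addb/false]_(j < n) \big[addb/false]_(k < n)
      ((i < j) && (j < k) && cubic_term x y i j k))
  (+) (\big[addb/false]_(i < n) \big[addb/false]_(j < n) ((i <= j) && (x i && y j)))
  (+) (\big[addb/false]_(i < n) ((i < p) && (x i && y i))).

Lemma odd_ftw p x y : odd (ftw p x y) = twist p x y.
Proof.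
rewrite /ftw /twist !oddD !odd_sum; congr (_ (+) _ (+) _).
- apply: eq_bigr => i _; rewrite odd_sum; apply: eq_bigr => j _; rewrite odd_sum.
  by apply: eq_bigr => k _; rewrite oddM !oddD !oddM !oddb.
- apply: eq_bigr => i _; rewrite odd_sum; apply: eq_bigr => j _.
  by rewrite !oddM !oddb.
- by apply: eq_bigr => i _; rewrite !oddM !oddb.
Qed.

Definition coboundary (h : Z2n n -> Z2n n -> bool) x y z :=
  h y z (+) h (x +' y) z (+) h x (y +' z) (+) h x y.

Definition diag_polar3 (h : Z2n n -> Z2n n -> bool) x y z :=
  h (x +' y +' z) (x +' y +' z) (+) h (x +' y) (x +' y) (+) h (x +' z) (x +' z)
  (+) h (y +' z) (y +' z) (+) h x x (+) h y y (+) h z z.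

(* For a bilinear [h] both sides vanish (its diagonal is quadratic); for the
   cubic terms both sides are the symmetrised trilinear form. *)
Definition coboundary_from_diag h :=
  forall x y z, coboundary h x y z = diag_polar3 h x y z.

Lemma coboundary_from_diag_sum (I : finType) (H : I -> Z2n n -> Z2n n -> bool) :
  (forall i, coboundary_from_diag (H i)) ->
  coboundary_from_diag (fun x y => \big[addb/false]_(i : I) H i x y).
Proof.
move=> HH x y z; rewrite /coboundary /diag_polar3 -!big_split.
by apply: eq_bigr => i _; exact: HH.
Qed.

Lemma coboundary_from_diag_addb h1 h2 :
  coboundary_from_diag h1 -> coboundary_from_diag h2 ->
  coboundary_from_diag (fun x y => h1 x y (+) h2 x y).
Proof.
move=> H1 H2 x y z.
have := @coboundary_from_diag_sum _ (fun b : bool => if b then h1 else h2) _ x y z.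
by rewrite /coboundary /diag_polar3 !big_bool; apply; case.
Qed.

Lemma coboundary_from_diag_cubic (i j k : 'I_n) :
  coboundary_from_diag (fun x y => (i < j) && (j < k) && cubic_term x y i j k).
Proof.
move=> x y z; rewrite /coboundary /diag_polar3 /cubic_term !ffunE.
case: ((i < j) && (j < k)) => //=.
by case: (x i); case: (x j); case: (x k); case: (y i); case: (y j); case: (y k);
   case: (z i); case: (z j); case: (z k).
Qed.

Lemma coboundary_from_diag_bilin (c : bool) (i j : 'I_n) :
  coboundary_from_diag (fun x y => c && (x i && y j)).
Proof.
move=> x y z; rewrite /coboundary /diag_polar3 !ffunE; case: c => //=.
by case: (x i); case: (x j); case: (y i); case: (y j); case: (z i); case: (z j).
Qed.

Lemma coboundary_from_diag_twist p : coboundary_from_diag (twist p).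
Proof.
apply: coboundary_from_diag_addb; first apply: coboundary_from_diag_addb.
- do 3 (apply: coboundary_from_diag_sum => ?); exact: coboundary_from_diag_cubic.
- do 2 (apply: coboundary_from_diag_sum => ?); exact: coboundary_from_diag_bilin.
- apply: coboundary_from_diag_sum => ?; exact: coboundary_from_diag_bilin.
Qed.

End Twist.

Section Coboundary.
Variables (n : nat) (g : Z2n n -> Z2n n -> bool).
Implicit Types (x y z e h k : Z2n n) (P : pred (Z2n n)).
Hypothesis g_cocycle : forall x y z, coboundary g x y z = false.
Hypothesis g_alt : forall x, g x x = false.

Lemma cocycle_addl x y z : g (x +' y) z = g y z (+) g x (y +' z) (+) g x y.
Proof.
have := g_cocycle x y z; rewrite /coboundary.
by case: (g (x +' y) z); case: (g y z); case: (g x (y +' z)); case: (g x y).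
Qed.

Lemma cocycle0l z : g (z2zero n) z = false.
Proof.
have := cocycle_addl (z2zero n) (z2zero n) z.
by rewrite z2addxx z2add0x g_alt; case: (g _ z).
Qed.

Lemma cocycle0r x : g x (z2zero n) = false.
Proof.
have := cocycle_addl x (z2zero n) (z2zero n).
by rewrite z2addxx z2addx0 g_alt; case: (g x _).
Qed.

Lemma cocycle_addKl x y : g (x +' y) y = g x y.
Proof. by rewrite cocycle_addl z2addxx g_alt cocycle0r. Qed.

Lemma cocycle_sym x y : g x y = g y x.
Proof.
have gyxy : g y (y +' x) = g y x.
  have := cocycle_addl y y x; rewrite z2addxx cocycle0l g_alt.
  by case: (g y x); case: (g y (y +' x)).
have := cocycle_addl x y (x +' y).
rewrite g_alt (z2addC x y) (z2addKl y x) gyxy g_alt.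
by case: (g x y); case: (g y x).
Qed.

Lemma cocycle_add2l e h k : g (e +' h) (e +' k) = g h k (+) g e k (+) g e h.
Proof.
have := cocycle_addl (e +' h) e k.
rewrite (z2addC e h) z2addK cocycle_addKl (cocycle_sym h e).
by case: (g h k); case: (g e k); case: (g e h); case: (g (h +' e) (e +' k)).
Qed.

Definition coboundary_on P (sig : Z2n n -> bool) :=
  forall x y, P x -> P y -> g x y = sig x (+) sig y (+) sig (x +' y).

Lemma coboundary_on_extend P e sig :
  (forall x y, P x -> P y -> P (x +' y)) -> coboundary_on P sig ->
  coboundary_on [pred x | P x || P (x +' e)]
    (fun x => if P x then sig x else sig (x +' e) (+) g e (x +' e)).
Proof.
move=> Padd gP.
have Pswap x y : P y -> P (x +' y) = P x.
  by move=> Py; apply/idP/idP => [/(Padd _ _)/(_ Py)|/(Padd _ _)/(_ Py)//]; rewrite z2addK.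
have mixed x y : ~~ P x -> P (x +' e) -> P y ->
    g x y = (sig (x +' e) (+) g e (x +' e)) (+) sig y
            (+) (sig (x +' y +' e) (+) g e (x +' y +' e)).
  move=> Px Pxe Py; set h := x +' e.
  have xE : x = e +' h by rewrite /h z2addC z2addK.
  have xyeE : x +' y +' e = h +' y by rewrite /h -z2addA (z2addC y e) z2addA.
  rewrite xyeE {1}xE cocycle_addl (gP _ _ Pxe Py).
  by case: (sig h); case: (sig y); case: (sig (h +' y)); case: (g e h); case: (g e (h +' y)).
move=> x y; rewrite !inE => Hx Hy; case Px: (P x); case Py: (P y); rewrite ?Px ?Py /= in Hx Hy.
- by rewrite Padd //; exact: gP.
- rewrite (z2addC x y) Pswap // Py cocycle_sym mixed ?Py //.
  by case: (sig x); case: (sig (y +' e) (+) g e (y +' e)); case: (sig _ (+) _).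
- by rewrite Pswap // Px mixed ?Px.
set h := x +' e; set k := y +' e.
have xE : x = e +' h by rewrite /h z2addC z2addK.
have yE : y = e +' k by rewrite /k z2addC z2addK.
have -> : x +' y = h +' k.
  by apply/ffunP => i; rewrite !ffunE; case: (x i); case: (y i); case: (e i).
rewrite Padd // {1}xE {1}yE cocycle_add2l gP //.
by case: (sig h); case: (sig k); case: (sig (h +' k)); case: (g e h); case: (g e k).
Qed.

Definition supported_below (m : nat) : pred (Z2n n) :=
  [pred x : Z2n n | [forall i : 'I_n, (m <= i) ==> ~~ x i]].

Lemma supported_below_add m x y :
  supported_below m x -> supported_below m y -> supported_below m (x +' y).
Proof.
move=> /forallP Hx /forallP Hy; apply/forallP => i; rewrite ffunE.
by have := Hx i; have := Hy i; case: (m <= i) => //= /negbTE -> /negbTE ->.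
Qed.

Lemma supported_below0 x : supported_below 0 x -> x = z2zero n.
Proof.
move=> /forallP Hx; apply/ffunP => i; rewrite ffunE.
by have := Hx i; case: (x i).
Qed.

Lemma supported_belowS (a : 'I_n) x : supported_below a.+1 x ->
  supported_below a x || supported_below a (x +' z2unit a).
Proof.
move=> /forallP Hx.
have Hgt (i : 'I_n) : a < i -> x i = false by move=> ai; have := Hx i; rewrite ai => /negbTE.
case xa: (x a); apply/orP; [right|left]; apply/forallP => i; apply/implyP => ai;
  rewrite ?ffunE; (have [->|ia] := eqVneq i a; first by rewrite ?eqxx xa);
  by rewrite Hgt ?(negbTE ia) // ltn_neqAle ai andbT eq_sym val_eqE.
Qed.

Lemma supported_below_n x : supported_below n x.
Proof. by apply/forallP => i; rewrite leqNgt ltn_ord. Qed.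

Lemma coboundary_on_supported_below m : m <= n ->
  exists sig, coboundary_on (supported_below m) sig.
Proof.
elim: m => [_|m IH mn].
  by exists (fun=> false) => x y /supported_below0 -> /supported_below0 ->; rewrite g_alt.
have [sig gm] := IH (ltnW mn); pose a := Ordinal mn.
have gm' := coboundary_on_extend (e := z2unit a) (@supported_below_add m) gm.
by eexists => x y /(supported_belowS (a := a)) Hx /(supported_belowS (a := a)) Hy; apply: gm'.
Qed.

Lemma cocycle_coboundary :
  exists sig : Z2n n -> bool, forall x y, g x y = sig x (+) sig y (+) sig (x +' y).
Proof.
have [sig gn] := coboundary_on_supported_below (leqnn n).
by exists sig => x y; apply: gn; exact: supported_below_n.
Qed.

End Coboundary.

Section GradedIso.
Import GRing.Theory.
Local Open Scope ring_scope.
Variable R : realType.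

Lemma scale_regularE (c d : R) : c *: (d : R^o) = c * d.
Proof. by []. Qed.

Section SignedPermutation.
Variables (n : nat) (T Ti : Z2n n -> Z2n n) (sig : Z2n n -> bool).
Hypotheses (TK : cancel T Ti) (TiK : cancel Ti T).

Definition signed_perm (a : Oalg R n) : Oalg R n :=
  [ffun z => (-1) ^+ sig (Ti z) * a (Ti z)].

Lemma eq_T_Ti x z : (z == T x) = (Ti z == x).
Proof. by apply/eqP/eqP => [->|<-]; rewrite ?TK ?TiK. Qed.

Lemma signed_perm_ub x : signed_perm (ub R x) = (-1) ^+ sig x *: ub R (T x).
Proof.
apply/ffunP => z; rewrite !ffunE eq_T_Ti scale_regularE.
by have [->|_] := eqVneq (Ti z) x; rewrite /= ?mulr0n ?mulr0.
Qed.

Lemma signed_perm_bij : bijective signed_perm.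
Proof.
have sq (b : bool) : (-1) ^+ b * (-1) ^+ b = 1 :> R by rewrite -signr_addb addbb.
exists (fun b : Oalg R n => [ffun x => (-1) ^+ sig x * b (T x)]) => a;
  by apply/ffunP => x; rewrite !ffunE ?TK ?TiK mulrA sq mul1r.
Qed.

Lemma signed_perm_omul p p' :
  (forall x y, T (x +' y) = T x +' T y) ->
  (forall x y, twist p x y (+) sig x (+) sig y = twist p' (T x) (T y) (+) sig (x +' y)) ->
  forall a b, signed_perm (omul p a b) = omul p' (signed_perm a) (signed_perm b).
Proof.
move=> Tadd Hsig a b; apply/ffunP => z.
rewrite /omul ffunE !sum_ffunE [RHS](reindex_inj (can_inj TK)) mulr_sumr.
apply: eq_bigr => x _; rewrite !sum_ffunE [RHS](reindex_inj (can_inj TK)) mulr_sumr.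
apply: eq_bigr => y _; rewrite !ffunE !TK -Tadd eq_T_Ti.
rewrite !scale_regularE; case: eqP => [->|_] /=; last by rewrite !mulr0.
rewrite !mulr1 -(signr_odd _ (ftw p x y)) -(signr_odd _ (ftw p' _ _)) !odd_ftw.
have -> : twist p x y = twist p' (T x) (T y) (+) sig (x +' y) (+) sig x (+) sig y.
  by rewrite -Hsig; case: (twist p x y); case: (sig x); case: (sig y).
move: (twist p' _ _) => t; rewrite !signr_addb.
set A := (-1) ^+ t; set B := (-1) ^+ sig (x +' y).
set X := (-1) ^+ sig x; set Y := (-1) ^+ sig y.
have BB : B * B = 1 by rewrite /B -signr_addb addbb.
rewrite [LHS](_ : _ = (B * B) * (X * a x * (Y * b y) * A)); last by ring.
by rewrite BB mul1r.
Qed.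

End SignedPermutation.

Lemma graded_iso_of_cochain n p p' (T Ti : Z2n n -> Z2n n)
    (sig : Z2n n -> bool) :
  cancel T Ti -> cancel Ti T -> (forall x y, T (x +' y) = T x +' T y) ->
  (forall x y, twist p x y (+) sig x (+) sig y = twist p' (T x) (T y) (+) sig (x +' y)) ->
  graded_iso R n p p'.
Proof.
move=> TK TiK Tadd Hsig; exists (signed_perm Ti sig); split.
- by move=> a b; apply/ffunP => z; rewrite !ffunE mulrDr.
- by move=> c a; apply/ffunP => z; rewrite !ffunE mulrCA.
- exact: signed_perm_bij.
- exact: signed_perm_omul.
- move=> x; exists (T x), ((-1) ^+ sig x); rewrite (signed_perm_ub sig TK TiK).
  by rewrite signr_eq0.
Qed.

Lemma graded_iso_of_diag n p p' (T Ti : Z2n n -> Z2n n) :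
  cancel T Ti -> cancel Ti T -> (forall x y, T (x +' y) = T x +' T y) ->
  (forall x, twist p' (T x) (T x) = twist p x x) -> graded_iso R n p p'.
Proof.
move=> TK TiK Tadd Tdiag.
pose g x y := twist p x y (+) twist p' (T x) (T y).
have g_cocycle x y z : coboundary g x y z = false.
  have gE : coboundary g x y z =
      coboundary (twist p) x y z (+) coboundary (twist p') (T x) (T y) (T z).
    rewrite /coboundary /g !Tadd.
    by move: (twist p _ _) (twist p _ _) (twist p _ _) (twist p _ _)
       (twist p' _ _) (twist p' _ _) (twist p' _ _) (twist p' _ _); do 8 case.
  rewrite gE !coboundary_from_diag_twist /diag_polar3 -!Tadd !Tdiag.
  by rewrite addbb.
have [sig Hsig] := cocycle_coboundary g_cocycle (fun x => etrans (congr1 _ (Tdiag x)) (addbb _)).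
apply: (@graded_iso_of_cochain n p p' T Ti sig TK TiK Tadd) => x y.
move: (Hsig x y); rewrite /g.
by case: (twist p x y); case: (twist p' (T x) (T y)); case: (sig x); case: (sig y);
   case: (sig (x +' y)).
Qed.

End GradedIso.

Section ElementarySymmetric.
Variable b : nat -> bool.

Definition esym1 j := \big[addb/false]_(0 <= i < j) b i.
Definition esym2 j := \big[addb/false]_(0 <= i < j) (b i && esym1 i).
Definition esym3 j := \big[addb/false]_(0 <= i < j) (b i && esym2 i).
Definition count_prefix j := \sum_(0 <= i < j) b i.

(* [esym_k j] is the parity of the binomial coefficient 'C(count_prefix j, k) *)
Lemma esym_parity j : [/\ esym1 j = odd (count_prefix j),
  esym2 j = (2 <= count_prefix j %% 4) & esym3 j = (count_prefix j %% 4 == 3)].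
Proof.
elim: j => [|j [IH1 IH2 IH3]]; first by rewrite /esym1 /esym2 /esym3 /count_prefix !big_geq.
rewrite /esym1 /esym2 /esym3 /count_prefix !big_nat_recr //= -/(esym1 j) -/(esym2 j).
rewrite -/(esym3 j) -/(count_prefix j) IH1 IH2 IH3.
case: (b j); last by rewrite /= !addbF addn0.
have modS : (count_prefix j).+1 %% 4 = (count_prefix j %% 4).+1 %% 4.
  by rewrite -addn1 -modnDml addn1.
rewrite /= addn1 modS oddS -odd_mod4.
have : count_prefix j %% 4 < 4 by rewrite ltn_mod.
by case: (count_prefix j %% 4) => [|[|[|[|r]]]].
Qed.

End ElementarySymmetric.

Section Diagonal.
Variable n : nat.
Implicit Types x m : Z2n n.

Definition weight x : nat := \sum_(i < n) x i.
Definition dotn x m : nat := \sum_(i < n) (x i && m i).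
Definition prefix_mask (p : nat) : Z2n n := [ffun i : 'I_n => i < p].

Definition bits x (k : nat) : bool :=
  if insub k is Some i then x i else false.

Lemma bitsE x (i : 'I_n) : bits x i = x i.
Proof. by rewrite /bits valK. Qed.

Lemma twist_cubic_diag x :
  \big[addb/false]_(i < n) \big[addb/false]_(j < n) \big[addb/false]_(k < n)
    ((i < j) && (j < k) && cubic_term x x i j k) = esym3 (bits x) n.
Proof.
under eq_bigr => i _ do rewrite exchange_big.
rewrite exchange_big; under eq_bigr => k _ do rewrite exchange_big.
rewrite /esym3 big_mkord; apply: eq_bigr => k _.
rewrite /esym2 -(big_addb_ord_prefix _ (ltnW (ltn_ord k))) -big_addb_andl.
apply: eq_bigr => j _; rewrite /esym1 -(big_addb_ord_prefix _ (ltnW (ltn_ord j))).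
transitivity ((bits x k && ((j < k) && bits x j)) &&
              \big[addb/false]_(i < n) ((i < j) && bits x i)); last first.
  by case: (bits x k); case: (j < k); case: (bits x j).
rewrite -big_addb_andl; apply: eq_bigr => i _; rewrite /cubic_term -!bitsE.
by case: (i < j); case: (j < k); case: (bits x i); case: (bits x j); case: (bits x k).
Qed.

Lemma twist_bilin_diag x :
  \big[addb/false]_(i < n) \big[addb/false]_(j < n) ((i <= j) && (x i && x j))
  = esym2 (bits x) n (+) esym1 (bits x) n.
Proof.
rewrite exchange_big /esym2 /esym1 -big_split big_mkord; apply: eq_bigr => j _.
transitivity (bits x j && \big[addb/false]_(i < n) ((i < j.+1) && bits x i)); last first.
  rewrite (big_addb_ord_prefix _ (ltn_ord j)) big_nat_recr //=.
  by case: (bits x j); case: (\big[addb/false]_(0 <= i < j) bits x i).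
rewrite -big_addb_andl; apply: eq_bigr => i _.
by rewrite ltnS -!bitsE; case: (i <= j); case: (bits x i); case: (bits x j).
Qed.

Lemma twist_diag p x :
  twist p x x = (weight x %% 4 != 0) (+) odd (dotn x (prefix_mask p)).
Proof.
have wE : weight x = count_prefix (bits x) n.
  by rewrite /weight /count_prefix big_mkord; apply: eq_bigr => i _; rewrite bitsE.
have dE : \big[addb/false]_(i < n) ((i < p) && (x i && x i)) = odd (dotn x (prefix_mask p)).
  by rewrite /dotn odd_sum; apply: eq_bigr => i _; rewrite oddb ffunE andbb andbC.
rewrite /twist twist_cubic_diag twist_bilin_diag dE wE.
have [-> -> ->] := esym_parity (bits x) n; congr (_ (+) _); rewrite -odd_mod4.
have : count_prefix (bits x) n %% 4 < 4 by rewrite ltn_mod.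
by case: (count_prefix (bits x) n %% 4) => [|[|[|[|r]]]].
Qed.

End Diagonal.

Section Transvection.
Variable n : nat.
Implicit Types x y m u v : Z2n n.
Local Notation z2zero := (z2zero n).
Local Notation z2ones := (z2ones n).

Lemma if_z2zeroE (b : bool) v i : (if b then v else z2zero) i = b && v i.
Proof. by case: b; rewrite ?ffunE. Qed.

Lemma dotnC x m : dotn x m = dotn m x.
Proof. by apply: eq_bigr => i _; rewrite andbC. Qed.

Lemma odd_dotnDl x y m : odd (dotn (x +' y) m) = odd (dotn x m) (+) odd (dotn y m).
Proof.
rewrite /dotn !odd_sum -big_split; apply: eq_bigr => i _; rewrite !oddb ffunE.
by case: (x i); case: (y i); case: (m i).
Qed.

Lemma odd_dotnDr x y m : odd (dotn m (x +' y)) = odd (dotn m x) (+) odd (dotn m y).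
Proof. by rewrite !(dotnC m) odd_dotnDl. Qed.

Lemma dotn0 x : dotn x z2zero = 0.
Proof. by rewrite /dotn big1 // => i _; rewrite ffunE andbF. Qed.

Lemma dotn_ones x : dotn x z2ones = weight x.
Proof. by apply: eq_bigr => i _; rewrite ffunE andbT. Qed.

Lemma dotnn x : dotn x x = weight x.
Proof. by apply: eq_bigr => i _; rewrite andbb. Qed.

Lemma weightD x v : weight (x +' v) + 2 * dotn x v = weight x + weight v.
Proof.
rewrite /weight /dotn big_distrr -!big_split /=; apply: eq_bigr => i _; rewrite ffunE.
by case: (x i); case: (v i).
Qed.

Lemma dotn_compl x v : dotn x (z2ones +' v) + dotn x v = weight x.
Proof.
rewrite /weight /dotn -big_split /=; apply: eq_bigr => i _; rewrite !ffunE.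
by case: (x i); case: (v i).
Qed.

Lemma weight0 : weight z2zero = 0.
Proof. by rewrite /weight big1 // => i _; rewrite ffunE. Qed.

Lemma weight_ones : weight z2ones = n.
Proof. by rewrite /weight (eq_bigr (fun=> 1)) ?sum1_card ?card_ord // => i; rewrite ffunE. Qed.

Lemma weight_addunit x (a : 'I_n) :
  weight (x +' z2unit a) = if x a then (weight x).-1 else (weight x).+1.
Proof.
have := weightD x (z2unit a).
have -> : weight (z2unit a) = 1.
  by rewrite /weight (bigD1 a) //= big1 ?ffunE ?eqxx // => i /negbTE ia; rewrite ffunE ia.
have -> : dotn x (z2unit a) = x a.
  rewrite /dotn (bigD1 a) //= big1 ?ffunE ?eqxx ?andbT ?addn0 // => i /negbTE ia.
  by rewrite ffunE ia andbF.
by case: (x a) => /=; lia.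
Qed.

Lemma odd_dotn_unit (a : 'I_n) m : odd (dotn (z2unit a) m) = m a.
Proof.
rewrite /dotn odd_sum (bigD1 a) //= big1 ?addbF; first by rewrite ffunE eqxx oddb.
by move=> i /negbTE ia; rewrite ffunE ia.
Qed.

Lemma weight_prefix_mask k : k <= n -> weight (prefix_mask n k) = k.
Proof.
move=> kn; rewrite /weight; under eq_bigr => i _ do rewrite ffunE.
rewrite -(big_mkord xpredT (fun i => nat_of_bool (i < k))).
rewrite (@big_cat_nat _ _ _ k 0 n _ _ (leq0n k) kn) /=.
rewrite [X in _ + X]big_nat_cond [X in _ + X]big1 ?addn0.
  by rewrite (eq_big_nat _ _ (F2 := fun _ => 1)) ?sum_nat_const_nat ?subn0 ?muln1 // => i /andP[_ ->].
by move=> i /andP[/andP[ki _] _]; rewrite ltnNge ki.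
Qed.

Definition transvection u v x := x +' (if odd (dotn x u) then v else z2zero).

Lemma transvectionD u v x y :
  transvection u v (x +' y) = transvection u v x +' transvection u v y.
Proof.
rewrite /transvection odd_dotnDl; apply/ffunP => i; rewrite !ffunE !if_z2zeroE.
by case: (odd (dotn x u)); case: (odd (dotn y u)); case: (x i); case: (y i); case: (v i).
Qed.

Lemma transvectionK u v : ~~ odd (dotn v u) -> involutive (transvection u v).
Proof.
move=> /negbTE vu x; rewrite {1}/transvection odd_dotnDl.
apply/ffunP => i; rewrite /transvection !ffunE !if_z2zeroE.
case: (odd (dotn x u)) => /=; first by rewrite vu /= -addbA addbb addbF.
by rewrite dotnC dotn0 /= !addbF.
Qed.

Definition preserves_weight4 u v :=
  forall x, (weight (transvection u v x) %% 4 != 0) = (weight x %% 4 != 0).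

(* Adding [v] of weight 2 mod 4 changes the weight by [2 - 2 <x, v>] mod 4: by 0
   when [<x, v>] is odd, by 2 otherwise, which keeps an odd weight odd. *)
Lemma preserves_weight4_sym v : weight v %% 4 = 2 -> preserves_weight4 v v.
Proof.
move=> wv x; rewrite /transvection; case: ifP => xv; last by rewrite z2addx0.
have := weightD x v; have := modn2 (dotn x v); rewrite xv /= => ? ?.
by congr negb; apply/idP/idP => /eqP ?; apply/eqP; lia.
Qed.

Lemma preserves_weight4_compl v :
  weight v %% 4 = 2 -> preserves_weight4 (z2ones +' v) v.
Proof.
move=> wv x; rewrite /transvection; case: ifP => xv; last by rewrite z2addx0.
have := weightD x v; have := dotn_compl x v.
have := modn2 (dotn x (z2ones +' v)); rewrite xv /= => ? ? ?.
by congr negb; apply/idP/idP => /eqP ?; apply/eqP; lia.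
Qed.

Lemma even_dotn_sym v : ~~ odd (weight v) -> ~~ odd (dotn v v).
Proof. by rewrite dotnn. Qed.

Lemma even_dotn_compl v : ~~ odd (weight v) -> ~~ odd (dotn v (z2ones +' v)).
Proof. by rewrite odd_dotnDr dotn_ones dotnn => /negbTE ->. Qed.

Definition diag_form m x := (weight x %% 4 != 0) (+) odd (dotn x m).

Definition mask_shift u v m := m +' (if odd (dotn v m) then u else z2zero).

Lemma diag_form_transvection u v m x : preserves_weight4 u v ->
  diag_form m (transvection u v x) = diag_form (mask_shift u v m) x.
Proof.
rewrite /diag_form => ->; congr (_ (+) _).
rewrite /transvection /mask_shift odd_dotnDl odd_dotnDr.
case vm: (odd (dotn v m)); case xu: (odd (dotn x u));
  by rewrite ?vm ?xu ?dotn0 ?(dotnC z2zero) ?dotn0.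
Qed.

End Transvection.

Lemma graded_iso_of_transvections (R : realType) n p p' (u1 v1 u2 v2 : Z2n n) :
  ~~ odd (dotn v1 u1) -> ~~ odd (dotn v2 u2) ->
  preserves_weight4 u1 v1 -> preserves_weight4 u2 v2 ->
  mask_shift u2 v2 (mask_shift u1 v1 (prefix_mask n p')) = prefix_mask n p ->
  graded_iso R n p p'.
Proof.
move=> /transvectionK K1 /transvectionK K2 W1 W2 masks.
pose T := transvection u1 v1 \o transvection u2 v2.
pose Ti := transvection u2 v2 \o transvection u1 v1.
apply: (@graded_iso_of_diag R n p p' T Ti).
- by move=> x; rewrite /T /Ti /= K1 K2.
- by move=> x; rewrite /T /Ti /= K2 K1.
- by move=> x y; rewrite /T /= !transvectionD.
move=> x; rewrite !twist_diag -!/(diag_form _ _) /T /=.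
by rewrite !diag_form_transvection // masks.
Qed.

Ltac decide_nat_tests :=
  repeat match goal with
  | |- context [?a == ?b :> nat] =>
      first [ rewrite (_ : (a == b) = false); last by apply/eqP; lia
            | rewrite (_ : (a == b) = true); last by apply/eqP; lia ]
  | |- context [leq ?a ?b] =>
      first [ rewrite (_ : (a <= b) = true); last by lia
            | rewrite (_ : (a <= b) = false); last by apply/negbTE; lia ]
  end.

(* [v1 = e_0 + e_p] and [v2 = v1 + e_(p-4) + ... + e_(p-1)] have weight 2 and 6;
   both mask shifts fire, adding [v1 + v2 = e_(p-4) + ... + e_(p-1)] to the mask. *)
Lemma graded_iso_sub4 (R : realType) p q : 5 <= p -> 1 <= q ->
  graded_iso R (p + q) p (p - 4).
Proof.
move=> p5 q1; set n := p + q.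
have lt_n k : k <= p -> k < n by rewrite /n; lia.
pose e k (k_le_p : k <= p) := z2unit (Ordinal (lt_n k k_le_p)).
pose v1 := z2zero n +' e 0 (leq0n p) +' e p (leqnn p).
pose v2 := v1 +' e (p - 4) (leq_subr 4 p) +' e (p - 3) (leq_subr 3 p)
  +' e (p - 2) (leq_subr 2 p) +' e (p - 1) (leq_subr 1 p).
have wv1 : weight v1 %% 4 = 2.
  by rewrite /v1 !weight_addunit !ffunE -!val_eqE /= weight0; decide_nat_tests.
have wv2 : weight v2 %% 4 = 2.
  by rewrite /v2 /v1 !weight_addunit !ffunE -!val_eqE /= weight0; decide_nat_tests.
apply: (@graded_iso_of_transvections R n p (p - 4) (z2ones n +' v1) v1
  (z2ones n +' v2) v2).
- exact/even_dotn_compl/mod4_even.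
- exact/even_dotn_compl/mod4_even.
- exact: preserves_weight4_compl.
- exact: preserves_weight4_compl.
have dot1 : odd (dotn v1 (prefix_mask n (p - 4))).
  by rewrite /v1 !odd_dotnDl !odd_dotn_unit dotnC dotn0 !ffunE /=; decide_nat_tests.
have dot2 : odd (dotn v2 (mask_shift (z2ones n +' v1) v1 (prefix_mask n (p - 4)))).
  rewrite /mask_shift dot1 /v2 /v1 !odd_dotnDl !odd_dotn_unit dotnC dotn0 !ffunE -!val_eqE /=.
  by decide_nat_tests.
rewrite {1}/mask_shift dot2 /mask_shift dot1; apply/ffunP => i.
rewrite /v2 /v1 !ffunE -!val_eqE /=.
case: (ltnP i (p - 4)) => hi; first by decide_nat_tests; case: (i == 0 :> nat).
case: (ltnP i p) => hi2; last by decide_nat_tests; case: (i == p :> nat).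
have : i = p - 4 :> nat \/ i = p - 3 :> nat \/ i = p - 2 :> nat \/ i = p - 1 :> nat.
  by lia.
by case=> [->|[->|[->|->]]]; decide_nat_tests.
Qed.

(* [v1 = e_0 + e_(p+1)], and [v2], the complement of [e_0 + e_p + e_(p+1)], has
   weight [n - 3 = 2 mod 4]; the mask shifts add [v1 + (e_0 + e_p + e_(p+1)) = e_p],
   the second one firing because [p] is even. *)
Lemma graded_iso_add1 (R : realType) p q : 2 <= p -> 2 <= q -> ~~ odd p ->
  (p + q) %% 4 = 1 -> graded_iso R (p + q) p (p + 1).
Proof.
move=> p2 q2 p_even n4; set n := p + q.
have lt_n k : k <= p + 1 -> k < n by rewrite /n; lia.
pose e k (k_le : k <= p + 1) := z2unit (Ordinal (lt_n k k_le)).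
pose v1 := z2zero n +' e 0 (leq0n _) +' e (p + 1) (leqnn _).
pose v2 := z2ones n +' e p (leq_addr 1 p) +' e 0 (leq0n _) +' e (p + 1) (leqnn _).
have wv1 : weight v1 %% 4 = 2.
  by rewrite /v1 !weight_addunit !ffunE -!val_eqE /= weight0; decide_nat_tests.
have wv2 : weight v2 %% 4 = 2.
  by rewrite /v2 !weight_addunit !ffunE -!val_eqE /= weight_ones; decide_nat_tests => /=; lia.
apply: (@graded_iso_of_transvections R n p (p + 1) v1 v1 (z2ones n +' v2) v2).
- exact/even_dotn_sym/mod4_even.
- exact/even_dotn_compl/mod4_even.
- exact: preserves_weight4_sym.
- exact: preserves_weight4_compl.
have dot1 : odd (dotn v1 (prefix_mask n (p + 1))).
  by rewrite /v1 !odd_dotnDl !odd_dotn_unit dotnC dotn0 !ffunE /=; decide_nat_tests.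
have dot2 : odd (dotn v2 (mask_shift v1 v1 (prefix_mask n (p + 1)))).
  rewrite /mask_shift dot1 /v2 !odd_dotnDl !odd_dotn_unit dotnC odd_dotnDl.
  rewrite dotn_ones weight_prefix_mask; last by rewrite /n; lia.
  rewrite /v1 !odd_dotnDl !odd_dotn_unit dotnC dotn0 !ffunE -!val_eqE /=.
  by decide_nat_tests; rewrite addn1 /= (negbTE p_even).
rewrite {1}/mask_shift dot2 /mask_shift dot1; apply/ffunP => i.
rewrite /v2 /v1 !ffunE -!val_eqE /=.
case: (ltnP i p) => hi; first by decide_nat_tests; case: (i == 0 :> nat).
case: (eqVneq (i : nat) p) => [->|hip]; first by decide_nat_tests.
by decide_nat_tests; case: (i == p + 1 :> nat).
Qed.

Theorem mainTheorem7 (R : realType) (p q k : nat) :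
  (1 <= k)%N -> (p + q = 4 * k + 1)%N ->
  ((1 <= p - 4)%N -> (1 <= q)%N ->
     graded_iso R (p + q) p (p - 4)) /\
  ((1 <= p)%N -> (1 <= q - 1)%N -> ~~ odd p ->
     graded_iso R (p + q) p (p + 1)).
Proof.
move=> _ pq; split=> [p5 q1 | p1 q2 p_even].
  by apply: graded_iso_sub4; lia.
have p2 : 2 <= p by case: p p1 p_even {pq} => [|[]].
by apply: graded_iso_add1 => //; lia.
Qed.
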